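(* Let $\chi_1,\dots,\chi_n,\hbar,q_1,\dots,q_n$ be elements of a commutative ring in which all $1-q_i/q_j$ ($i\neq j$) and $q_j$ are invertible (e.g. indeterminates over $\mathbb C$ in the field of rational functions). Let $M(\chi)$ be the $n\times n$ matrix with $M_{ii}=\chi_i$ and $M_{ij}=\frac{\hbar}{1-q_i/q_j}$ for $i\ne j$, and define $\mathcal E_k(\chi)$ by $\det(y\,1_n+M(\chi))=y^n+\sum_{k=1}^n\mathcal E_k(\chi)y^{n-k}$. Then for every $1\le k\le n$, $$\mathcal E_k(\chi)=\sum_K\sum_\pi J(\pi)V(\pi),$$ where $K$ ranges over all $k$-element subsets of $\{1,\dots,n\}$, $\pi$ ranges over all matchings of $K$ (involutions $\pi:K\to K$, $\pi^2=\mathrm{id}$), and $$J(\pi)=\prod_{i:\pi(i)=i}\chi_i,\qquad V(\pi)=\prod_{i<j,\ \pi(i)=j}\frac{\hbar^2q_iq_j}{(q_i-q_j)^2}.$$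
   Context: In the paper this is applied with $\chi_i=D_{-\mathbf e_i}+\hbar\sum_{a<i}\frac{q_a/q_i}{1-q_a/q_i}-\hbar\sum_{b>i}\frac{q_i/q_b}{1-q_i/q_b}$ in $QH^*_{\hat{\mathbb T}}(T^*\mathcal B)$ for $GL(n)$, but the identity is a formal identity in the stated entries. *)

From HB Require Import structures.
From mathcomp Require Import all_boot all_order all_algebra all_fingroup.
Set Implicit Arguments. Unset Strict Implicit. Unset Printing Implicit Defensive.
Import GRing.Theory.
Local Open Scope ring_scope.

Definition Mchi (R : comUnitRingType) (n : nat) (chi : 'I_n -> R) (hbar : R)
  (q : 'I_n -> R) : 'M[R]_n :=
  \matrix_(i, j) (if i == j then chi i else hbar / (1 - q i / q j)).

Definition detPoly (R : comUnitRingType) (n : nat) (M : 'M[R]_n) : {poly R} :=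
  \det ('X%:M + map_mx polyC M).

Definition Ecoef (R : comUnitRingType) (n : nat) (chi : 'I_n -> R) (hbar : R)
  (q : 'I_n -> R) (k : nat) : R :=
  (detPoly (Mchi chi hbar q))`_(n - k).

(* A matching (involution) of K, represented as a permutation of 'I_n that
   fixes every point outside K and squares to the identity. *)
Definition is_matching (n : nat) (K : {set 'I_n}) (s : {perm 'I_n}) : bool :=
  perm_on K s && (s * s == 1)%g.

Definition Jw (R : comUnitRingType) (n : nat) (chi : 'I_n -> R)
  (K : {set 'I_n}) (s : {perm 'I_n}) : R :=
  \prod_(i in K | s i == i) chi i.

Definition Vw (R : comUnitRingType) (n : nat) (hbar : R) (q : 'I_n -> R)
  (s : {perm 'I_n}) : R :=
  \prod_(i : 'I_n) \prod_(j : 'I_n | (i < j)%N && (s i == j))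
     (hbar ^+ 2 * q i * q j / (q i - q j) ^+ 2).

(* Write M for M(chi).  The coefficient E_k of y^(n-k) in det(y + M) is the
   sum of the principal k x k minors of M (Section PrincipalMinors), so it is
   enough to show that each principal minor [minor M K] equals the matching sum
   over K.  Both sides satisfy the same recursion in K: for v in K,
       f(K) = chi_v f(K \ v) + sum_(p in K \ v) w(v,p) f(K \ v \ p),
   where w(v,p) = hbar^2 q_v q_p / (q_v - q_p)^2, and both equal 1 on the
   empty set; hence they agree (lemma [set_recursion_unique]).

   For a minor, expanding the Leibniz formula according to where the
   permutation sends v gives, for ANY matrix, the fixed-point term, the
   2-cycle terms -M_pv M_vp minor(K \ v \ p), and a remainder made of the
   longer cycles through v (lemma [minor_expand]).  For a matrix whose
   off-diagonal entries are hbar a_ij with a_ij + a_ji = 1 and the three-term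
   relation a_pv a_vw = a_pw (a_pv + a_vw - 1), the remainder cancels
   (lemma [cycle_remainder_eq0]).  The entries a_ij = (1 - q_i/q_j)^-1 of M(chi)
   satisfy both relations.  For matchings, the recursion comes from splitting
   off the partner of v. *)

From HB Require Import structures.
From mathcomp Require Import all_boot all_order all_algebra all_fingroup.
From mathcomp Require Import ring.
Set Implicit Arguments. Unset Strict Implicit. Unset Printing Implicit Defensive.
Import GRing.Theory.
Local Open Scope ring_scope.

Lemma set_recursion_unique (T : finType) (R : pzSemiRingType)
    (c : T -> R) (w : T -> T -> R) (F G : {set T} -> R) :
  F set0 = G set0 ->
  (forall (K : {set T}) v, v \in K ->
     F K = c v * F (K :\ v) + \sum_(p in K :\ v) w v p * F (K :\ v :\ p)) ->
  (forall (K : {set T}) v, v \in K ->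
     G K = c v * G (K :\ v) + \sum_(p in K :\ v) w v p * G (K :\ v :\ p)) ->
  forall K, F K = G K.
Proof.
move=> FG0 recF recG K; have [m] := ubnP #|K|; elim: m K => // m IH K.
case: (set_0Vmem K) => [-> //|[v vK]] Km.
have smaller : (#|K :\ v| < m)%N by move: Km; rewrite (cardsD1 v K) vK.
rewrite (recF _ _ vK) (recG _ _ vK) IH //; congr (_ + _).
apply: eq_bigr => p pKv; rewrite IH //.
by apply: leq_ltn_trans smaller; rewrite (cardsD1 p (K :\ v)) leq_addl.
Qed.

Section PermutationSurgery.
Variable n : nat.
Implicit Types (K : {set 'I_n}) (s : {perm 'I_n}) (p v : 'I_n).

(* Every permutation s moving v is uniquely [tperm p v * s'] with s' v = v and
   p != v: in cycle notation, v is inserted into the cycle of s' right after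
   p (so s p = v and s v = s' p). *)
Lemma sum_perm_moving (R : nmodType) v (P : pred {perm 'I_n})
    (g : {perm 'I_n} -> R) :
  \sum_(s | P s && (s v != v)) g s =
  \sum_(s' : {perm 'I_n} | s' v == v) \sum_(p | (p != v) && P (tperm p v * s')%g)
     g (tperm p v * s')%g.
Proof.
rewrite pair_big_dep /=.
rewrite (reindex_onto (fun j : {perm 'I_n} * 'I_n => (tperm j.2 v * j.1)%g)
   (fun s : {perm 'I_n} => (tperm (s^-1%g v) v * s, s^-1%g v))%g) /=; last first.
  by move=> s _; rewrite mulgA tperm2 mul1g.
apply: eq_bigl => [[s p]] /=.
rewrite permM tpermR invMg tpermV permM.
case: (eqVneq (s v) v) => [sv|sv].
  have svi : (s^-1)%g v = v by rewrite -{1}sv permK.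
  rewrite svi tpermR mulgA tperm2 mul1g eqxx andbT.
  case: (eqVneq p v) => [->|pv]; first by rewrite sv eqxx !andbF.
  by rewrite -{2}sv (inj_eq perm_inj) pv andbT.
apply/negbTE/negP => /andP[_ /eqP [_ H]].
move: H => /(congr1 (tperm p v)); rewrite tpermK tpermL => H.
by move: sv; rewrite -{1}H permKV eqxx.
Qed.

Lemma perm_on0 s : perm_on set0 s = (s == 1%g).
Proof.
apply/idP/eqP => [H|->]; last exact: perm_on1.
by apply: (perm_on_id H); rewrite cards0.
Qed.

Lemma perm_onD1 K v s : perm_on (K :\ v) s = perm_on K s && (s v == v).
Proof.
apply/idP/andP => [H|[HK sv]].
  split; first exact: subset_trans H (subsetDl _ _).
  by apply/eqP/(out_perm H); rewrite !inE eqxx.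
apply/subsetP => x; rewrite inE => sx; rewrite !inE; apply/andP; split.
  by apply: contraNneq sx => ->.
by apply: (subsetP HK); rewrite inE.
Qed.

Lemma perm_on_insert K v p s : v \in K -> s v = v -> p != v ->
  perm_on K (tperm p v * s)%g = (p \in K) && perm_on (K :\ v) s.
Proof.
move=> vK sv pv; rewrite perm_onD1 sv eqxx andbT.
have onK_p : perm_on K (tperm p v * s)%g -> p \in K.
  by move/subsetP; apply; rewrite inE permM tpermL sv eq_sym.
apply/idP/andP => [H|[pK HK]].
  split; first exact: onK_p.
  apply/subsetP => x; rewrite inE => sx.
  case: (eqVneq x p) => [->|xp]; first exact: onK_p.
  case: (eqVneq x v) => [xv|xv]; first by move: sx; rewrite xv sv eqxx.
  by apply: (subsetP H); rewrite inE permM tpermD // eq_sym.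
apply/subsetP => x; rewrite inE permM => sx.
case: (eqVneq x p) => [-> //|xp]; case: (eqVneq x v) => [-> //|xv].
by apply: (subsetP HK); rewrite inE; move: sx; rewrite tpermD // eq_sym.
Qed.

Lemma sign_insert (R : pzRingType) v p s : p != v ->
  (-1) ^+ (tperm p v * s)%g = - ((-1) ^+ s) :> R.
Proof. by move=> pv; rewrite odd_permM odd_tperm pv signr_addb expr1 mulN1r. Qed.

Lemma insert_away p v s i : i != p -> i != v -> (tperm p v * s)%g i = s i.
Proof. by move=> ip iv; rewrite permM tpermD // eq_sym. Qed.

Lemma prod_insert (R : comPzSemiRingType) (f : 'I_n -> 'I_n -> R) K v p s :
  v \in K -> p \in K :\ v -> s v = v ->
  \prod_(i in K) f i ((tperm p v * s)%g i) =
  f p v * f v (s p) * \prod_(i in K :\ v :\ p) f i (s i).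
Proof.
move=> vK pKv sv; rewrite (big_setD1 v vK) (big_setD1 p pKv) /= mulrA.
rewrite !permM tpermR tpermL sv [f v _ * _]mulrC; congr (_ * _).
by apply: eq_bigr => i; rewrite !inE => /andP[ip /andP[iv _]]; rewrite insert_away.
Qed.

End PermutationSurgery.

Section PrincipalMinors.
Variables (R : comUnitRingType) (n : nat) (M : 'M[R]_n).
Implicit Types (K : {set 'I_n}) (s : {perm 'I_n}) (p v : 'I_n).

Definition minor K : R :=
  \sum_(s | perm_on K s) (-1) ^+ s * \prod_(i in K) M i (s i).

Lemma minor0 : minor set0 = 1.
Proof.
by rewrite /minor (eq_bigl _ _ (@perm_on0 n)) big_pred1_eq odd_perm1 big_set0 mulr1.
Qed.

Lemma perm_on_setC K s : perm_on K s = (~: K \subset [set i | s i == i]).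
Proof.
apply/subsetP/subsetP => H x.
  by rewrite in_setC inE => xK; apply: contraR xK => sx; apply: H.
rewrite inE => sx; apply: contraR sx; rewrite -in_setC => xK.
by have := H x xK; rewrite inE.
Qed.

(* In a Leibniz term of det(y + M), the diagonal factors y + M_ii occur only at
   fixed points of s; choosing y from the fixed points in J leaves the product
   of M over the complement of J. *)
Lemma coef_prod_fixed s m (c : 'I_n -> R) :
  (\prod_i ('X *+ (i == s i) + (c i)%:P))`_m =
  \sum_(J : {set 'I_n} | (J \subset [set i | s i == i]) && (#|J| == m))
     \prod_(i in ~: J) c i.
Proof.
rewrite bigA_distr coef_sum [RHS]big_mkcond /=.
apply: eq_bigr => J _; case: (boolP (J \subset _)) => HJ /=; last first.
  case/subsetPn: HJ => i Ji; rewrite inE eq_sym => si.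
  by rewrite (bigD1 i) //= Ji (negbTE si) mulr0n mul0r coef0.
rewrite (bigID (mem J)) /= (eq_bigr (fun _ => 'X)); last first.
  move=> i Ji; rewrite Ji; move/subsetP: HJ => /(_ i Ji); rewrite inE => /eqP ->.
  by rewrite eqxx mulr1n.
rewrite prodr_const (eq_bigr (fun i => (c i)%:P)); last by move=> i /negbTE ->.
rewrite -rmorph_prod /= coefMC coefXn eq_sym.
case: eqP => _; rewrite ?mul1r ?mul0r //.
by apply: eq_bigl => i; rewrite in_setC.
Qed.

Lemma coef_detPoly k : (k <= n)%N ->
  (detPoly M)`_(n - k) = \sum_(K : {set 'I_n} | #|K| == k) minor K.
Proof.
move=> kn; rewrite /minor (exchange_big_dep xpredT) //= /detPoly /determinant.
rewrite coef_sum; apply: eq_bigr => s _.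
rewrite -(rmorph_sign (@polyC R)) coefCM -big_distrr /=; congr (_ * _).
rewrite (eq_bigr (fun i => 'X *+ (i == s i) + (M i (s i))%:P)); last first.
  by move=> i _; rewrite !mxE.
rewrite coef_prod_fixed (reindex_inj (@setC_inj _)) /=.
apply: eq_big => [K|K _]; last by rewrite setCK.
rewrite -perm_on_setC andbC; congr (_ && _).
have Kn : (#|K| <= n)%N by rewrite -[X in (_ <= X)%N]card_ord max_card.
rewrite [#|~: K|]cardsCs setCK card_ord.
by apply/eqP/eqP => [H|->] //; rewrite -(subKn Kn) H subKn.
Qed.

(* Expansion of a minor according to the image of v: either v is fixed, or v
   sits in a cycle of length >= 2, right after some p. *)
Lemma minor_expand_cycles K v : v \in K ->
  minor K = M v v * minor (K :\ v)
    - \sum_(s | perm_on (K :\ v) s) (-1) ^+ s *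
        \sum_(p in K :\ v) M p v * M v (s p) * \prod_(i in K :\ v :\ p) M i (s i).
Proof.
move=> vK; rewrite /minor (bigID (fun s : {perm 'I_n} => s v == v)) /=.
congr (_ + _).
  rewrite big_distrr /=; apply: eq_big => s; first by rewrite perm_onD1.
  by move=> /andP[_ /eqP sv]; rewrite (big_setD1 v vK) /= sv mulrCA.
rewrite (sum_perm_moving v (perm_on K)) -sumrN.
rewrite (bigID (perm_on (K :\ v))) /= [X in _ + X]big1 ?addr0; last first.
  move=> s /andP[/eqP sv Hs]; apply: big_pred0 => p.
  by case: (eqVneq p v) => [->|pv] //=; rewrite perm_on_insert // (negbTE Hs) andbF.
apply: eq_big => s; first by rewrite perm_onD1 andbC -andbA andbb.
move=> /andP[_ Hs]; have sv : s v = v by apply: (out_perm Hs); rewrite !inE eqxx.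
rewrite big_distrr -sumrN; apply: eq_big => p.
  case: (eqVneq p v) => [->|pv]; first by rewrite !inE eqxx.
  by rewrite perm_on_insert // Hs andbT !inE pv.
move=> /andP[pv]; rewrite perm_on_insert // => /andP[pK _].
have pKv : p \in K :\ v by rewrite !inE pv.
by rewrite sign_insert // prod_insert // mulNr.
Qed.

Lemma minor_expand K v : v \in K ->
  minor K = M v v * minor (K :\ v)
    - \sum_(p in K :\ v) M p v * M v p * minor (K :\ v :\ p)
    - \sum_(s | perm_on (K :\ v) s) (-1) ^+ s *
        \sum_(p in K :\ v | s p != p)
           M p v * M v (s p) * \prod_(i in K :\ v :\ p) M i (s i).
Proof.
move=> vK; rewrite (minor_expand_cycles vK) -addrA -opprD; congr (_ - _).
under eq_bigr => s _ do rewrite (bigID (fun p => s p == p)) /= mulrDr.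
rewrite big_split /=; congr (_ + _).
under eq_bigr do rewrite big_distrr /=.
rewrite (exchange_big_dep (mem (K :\ v))) /=; last by move=> s p _ /andP[].
apply: eq_bigr => p pKv; rewrite /minor big_distrr /=.
apply: eq_big => s; first by rewrite pKv (perm_onD1 (K :\ v)).
by move=> /andP[_ /andP[_ /eqP sp]]; rewrite sp mulrCA.
Qed.

End PrincipalMinors.

Section CauchyTypeMinors.
Variables (R : comUnitRingType) (n : nat).
Variables (d : 'I_n -> R) (hbar : R) (a : 'I_n -> 'I_n -> R).
Implicit Types (K : {set 'I_n}) (s : {perm 'I_n}) (p v : 'I_n).

(* The relations satisfied by a_ij = (1 - q_i/q_j)^-1 that make the longer
   cycles through a vertex cancel. *)
Hypothesis a_compl : forall i j, i != j -> a i j + a j i = 1.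
Hypothesis a_three : forall i j k, i != j -> j != k -> i != k ->
  a i j * a j k = a i k * (a i j + a j k - 1).

Definition cauchy_mx : 'M[R]_n :=
  \matrix_(i, j) (if i == j then d i else hbar * a i j).
Local Notation M := cauchy_mx.

(* Inserting v after p into a cycle of s (of length >= 2) multiplies the
   corresponding term by hbar (a_pv + a_v,s(p) - 1); summed over p these
   factors vanish, by a_compl after reindexing p |-> s p. *)
Lemma cycle_remainder_eq0 K v s : perm_on (K :\ v) s ->
  \sum_(p in K :\ v | s p != p)
     M p v * M v (s p) * \prod_(i in K :\ v :\ p) M i (s i) = 0.
Proof.
move=> Hs; have sv : s v = v by apply: (out_perm Hs); rewrite !inE eqxx.
set W := \prod_(i in K :\ v) M i (s i).
transitivity (\sum_(p in K :\ v | s p != p) hbar * W * (a p v + a v (s p) - 1)).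
  apply: eq_bigr => p /andP[pKv sp].
  have pv : p != v by move: pKv; rewrite !inE => /andP[].
  have vsp : v != s p by rewrite -{1}sv (inj_eq perm_inj) eq_sym.
  have psp : p != s p by rewrite eq_sym.
  rewrite /W (big_setD1 p pKv) /= !mxE (negbTE pv) (negbTE vsp) (negbTE psp).
  transitivity (hbar * hbar * (a p v * a v (s p)) *
                \prod_(i in K :\ v :\ p) M i (s i)); first by ring.
  by rewrite a_three //; ring.
have shift : \sum_(p in K :\ v | s p != p) a v (s p) =
              \sum_(p in K :\ v | s p != p) a v p.
  rewrite [RHS](reindex_inj (@perm_inj _ s)) /=.
  by apply: eq_bigl => p; rewrite (perm_closed _ Hs) (inj_eq perm_inj).
rewrite -big_distrr /= sumrB big_split /= shift -big_split /=.
rewrite (eq_bigr (fun _ => 1)) ?subrr ?mulr0 //.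
by move=> p /andP[]; rewrite !inE => /andP[pv _] _; apply: a_compl.
Qed.

Lemma cauchy_minor_rec K v : v \in K ->
  minor M K = d v * minor M (K :\ v)
    + \sum_(p in K :\ v) (- (M p v * M v p)) * minor M (K :\ v :\ p).
Proof.
move=> vK; rewrite (minor_expand _ vK) [X in _ - X]big1 ?subr0; last first.
  by move=> s Hs; rewrite cycle_remainder_eq0 ?mulr0.
by rewrite mxE eqxx -sumrN; under [in RHS]eq_bigr do rewrite mulNr.
Qed.

End CauchyTypeMinors.

Section CauchyEntries.
Variables (R : comUnitRingType) (n : nat) (q : 'I_n -> R).
Hypothesis hq : forall j, q j \is a GRing.unit.
Hypothesis hdiff : forall i j, i != j -> (1 - q i / q j) \is a GRing.unit.

(* The off-diagonal entries of M(chi), divided by hbar. *)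
Definition cauchy_entry (i j : 'I_n) : R := (1 - q i / q j)^-1.
Local Notation a := cauchy_entry.

Lemma sub_q_factor i j : (1 - q i / q j) * q j = q j - q i.
Proof. by rewrite mulrBl mul1r divrK. Qed.

Lemma sub_q_unit i j : i != j -> q j - q i \is a GRing.unit.
Proof. by move=> ij; rewrite -sub_q_factor unitrM hdiff // hq. Qed.

Lemma cauchy_entry_mul i j : i != j -> a i j * (q j - q i) = q j.
Proof. by move=> ij; rewrite -sub_q_factor mulrA mulVr ?mul1r ?hdiff. Qed.

Lemma cauchy_entry_compl i j : i != j -> a i j + a j i = 1.
Proof.
move=> ij; have ji : j != i by rewrite eq_sym.
apply: (mulIr (sub_q_unit ij)); rewrite mul1r.
transitivity (a i j * (q j - q i) - a j i * (q i - q j)); first by ring.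
by rewrite !cauchy_entry_mul //; ring.
Qed.

Lemma cauchy_entry_three i j k : i != j -> j != k -> i != k ->
  a i j * a j k = a i k * (a i j + a j k - 1).
Proof.
move=> ij jk ik.
have u : (q j - q i) * (q k - q j) * (q k - q i) \is a GRing.unit.
  by rewrite !unitrM !sub_q_unit.
apply: (mulIr u).
transitivity ((a i j * (q j - q i)) * (a j k * (q k - q j)) * (q k - q i)).
  by ring.
transitivity (a i k * (q k - q i) * ((a i j * (q j - q i)) * (q k - q j)
    + (a j k * (q k - q j)) * (q j - q i) - (q j - q i) * (q k - q j))); last first.
  by ring.
by rewrite !cauchy_entry_mul //; ring.
Qed.

Lemma cauchy_entry_pair i j : i != j ->
  - (a i j * a j i) = q i * q j / (q i - q j) ^+ 2.
Proof.
move=> ij; have ji : j != i by rewrite eq_sym.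
apply: (mulIr (unitrX 2 (sub_q_unit ji))); rewrite divrK ?unitrX ?sub_q_unit //.
transitivity ((a i j * (q j - q i)) * (a j i * (q i - q j))); first by ring.
by rewrite !cauchy_entry_mul // mulrC.
Qed.

End CauchyEntries.

Section Matchings.
Variables (R : comUnitRingType) (n : nat).
Variables (chi : 'I_n -> R) (hbar : R) (q : 'I_n -> R).
Implicit Types (K : {set 'I_n}) (s : {perm 'I_n}) (p v : 'I_n).

Definition pair_weight i j : R := hbar ^+ 2 * q i * q j / (q i - q j) ^+ 2.

Lemma pair_weight_sym i j : pair_weight i j = pair_weight j i.
Proof. by rewrite /pair_weight -[(q j - q i) ^+ 2]sqrrN opprB [_ * q j * q i]mulrAC. Qed.

Definition matching_sum K : R :=
  \sum_(s | is_matching K s) Jw chi K s * Vw hbar q s.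

Lemma Vw_pairs s :
  Vw hbar q s = \prod_(i : 'I_n) (if (i < s i)%N then pair_weight i (s i) else 1).
Proof.
apply: eq_bigr => i _; rewrite big_mkcondl /=.
by rewrite (big_pred1 (s i)) // => j; rewrite /= eq_sym.
Qed.

Lemma matching_sum0 : matching_sum set0 = 1.
Proof.
have only1 : is_matching (set0 : {set 'I_n}) =1 pred1 1%g.
  move=> s; rewrite /is_matching perm_on0 /=.
  by case: (eqVneq s 1%g) => [->|]; rewrite ?mulg1 ?eqxx.
rewrite /matching_sum (eq_bigl _ _ only1) big_pred1_eq /Jw big_pred0 ?mul1r.
  by rewrite Vw_pairs; apply: big1 => i _; rewrite perm1 ltnn.
by move=> i; rewrite in_set0.
Qed.

Lemma Vw_insert v p s : s v = v -> s p = p -> p != v ->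
  Vw hbar q (tperm p v * s)%g = pair_weight v p * Vw hbar q s.
Proof.
move=> sv sp pv; rewrite !Vw_pairs (bigD1 p) //= (bigD1 v) 1?eq_sym //=.
rewrite [in RHS](bigD1 p) //= [in RHS](bigD1 v) 1?eq_sym //=.
rewrite !permM tpermL tpermR sv sp !ltnn !mul1r mulrA; congr (_ * _).
  case: (ltngtP p v) => [lt|gt|e] /=.
  - by rewrite mulr1 pair_weight_sym.
  - by rewrite mul1r.
  - by move/val_inj: e pv => ->; rewrite eqxx.
by apply: eq_bigr => i /andP[ip iv]; rewrite insert_away.
Qed.

Lemma Jw_insert K v p s : s v = v -> s p = p -> p != v ->
  Jw chi K (tperm p v * s)%g = Jw chi (K :\ v :\ p) s.
Proof.
move=> sv sp pv; apply: eq_bigl => i; rewrite !inE.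
case: (eqVneq i p) => [->|ip]; first by rewrite permM tpermL sv eq_sym (negbTE pv) !andbF.
case: (eqVneq i v) => [->|iv]; first by rewrite permM tpermR sp (negbTE pv) !andbF.
by rewrite insert_away.
Qed.

(* Adding a 2-cycle (p v) to an involution fixing p and v keeps it an
   involution, since the transposition commutes with it. *)
Lemma square_insert_pair v p s : s v = v -> s p = p ->
  ((tperm p v * s) * (tperm p v * s))%g = (s * s)%g.
Proof.
move=> sv sp.
have Hs : perm_on (~: [set p; v]) s.
  by apply/subsetP => x; rewrite !inE; apply: contraNN => /orP[] /eqP ->; rewrite ?sp ?sv.
have ts : commute (tperm p v) s.
  by apply: perm_onC (tperm_on p v) Hs _; rewrite disjoints_subset setCK.
by rewrite -mulgA (mulgA s) -ts !mulgA tperm2 mul1g.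
Qed.

Lemma square_insert_cycle v p s : s v = v -> p != v -> s p != p ->
  ((tperm p v * s) * (tperm p v * s))%g != 1%g.
Proof.
move=> sv pv sp; have spv : s p != v by rewrite -sv (inj_eq perm_inj).
apply/eqP => /(congr1 (fun u : {perm 'I_n} => u v)).
rewrite !permM perm1 tpermR tpermD 1?eq_sym // => /eqP.
by rewrite -sv (inj_eq perm_inj) (negbTE spv).
Qed.

Lemma is_matching_insert K v p s : v \in K -> s v = v -> p != v ->
  is_matching K (tperm p v * s)%g =
  (p \in K :\ v) && is_matching (K :\ v :\ p) s.
Proof.
move=> vK sv pv; rewrite /is_matching perm_on_insert //.
case: (eqVneq (s p) p) => sp.
  by rewrite square_insert_pair // (perm_onD1 (K :\ v)) sp eqxx andbT !inE pv andbA.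
rewrite (negbTE (square_insert_cycle sv pv sp)) (perm_onD1 (K :\ v)) (negbTE sp).
by rewrite !andbF.
Qed.

(* The matching sum obeys the recursion of the principal minors: v is either
   unmatched (weight chi_v) or matched with some p (weight pair_weight v p). *)
Lemma matching_sum_rec K v : v \in K ->
  matching_sum K = chi v * matching_sum (K :\ v)
    + \sum_(p in K :\ v) pair_weight v p * matching_sum (K :\ v :\ p).
Proof.
move=> vK; rewrite /matching_sum (bigID (fun s : {perm 'I_n} => s v == v)) /=.
congr (_ + _).
  rewrite big_distrr /=; apply: eq_big => s.
    by rewrite /is_matching perm_onD1 andbAC.
  move=> /andP[_ sv]; rewrite mulrA; congr (_ * _).
  rewrite /Jw (bigD1 v) /=; last by rewrite vK sv.
  congr (_ * _); apply: eq_bigl => i; rewrite !inE.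
  by case: (i \in K); case: (s i == i); case: (i != v).
rewrite (sum_perm_moving v (is_matching K)).
transitivity (\sum_(s : {perm 'I_n} | s v == v)
   \sum_(p | (p \in K :\ v) && is_matching (K :\ v :\ p) s)
     pair_weight v p * (Jw chi (K :\ v :\ p) s * Vw hbar q s)).
  apply: eq_bigr => s /eqP sv; apply: eq_big => p.
    case: (eqVneq p v) => [->|pv]; first by rewrite !inE eqxx.
    by rewrite is_matching_insert.
  move=> /andP[pv]; rewrite is_matching_insert // => /andP[pKv /andP[Hs _]].
  have sp : s p = p by apply: (out_perm Hs); rewrite !inE eqxx.
  by rewrite Jw_insert // Vw_insert // mulrCA.
rewrite (exchange_big_dep (mem (K :\ v))) /=; last by move=> s p _ /andP[].
apply: eq_bigr => p pKv; rewrite big_distrr /=.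
apply: eq_bigl => s; rewrite pKv /=; apply/andP/idP => [[] //|H]; split => //.
have vn : v \notin K :\ v :\ p by rewrite !inE eqxx andbF.
by rewrite (out_perm (proj1 (andP H)) vn).
Qed.

End Matchings.

Lemma Mchi_minor_rec (R : comUnitRingType) (n : nat)
    (chi : 'I_n -> R) (hbar : R) (q : 'I_n -> R)
    (hq : forall j, q j \is a GRing.unit)
    (hdiff : forall i j, i != j -> (1 - q i / q j) \is a GRing.unit)
    (K : {set 'I_n}) (v : 'I_n) : v \in K ->
  minor (Mchi chi hbar q) K = chi v * minor (Mchi chi hbar q) (K :\ v)
    + \sum_(p in K :\ v) pair_weight hbar q v p * minor (Mchi chi hbar q) (K :\ v :\ p).
Proof.
move=> vK; have -> : Mchi chi hbar q = cauchy_mx chi hbar (cauchy_entry q) by [].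
rewrite (cauchy_minor_rec chi hbar (cauchy_entry_compl hq hdiff)
          (cauchy_entry_three hq hdiff) vK).
congr (_ + _); apply: eq_bigr => p; rewrite !inE => /andP[pv _].
have vp : v != p by rewrite eq_sym.
rewrite !mxE (negbTE pv) (negbTE vp); congr (_ * _).
transitivity (hbar ^+ 2 * - (cauchy_entry q v p * cauchy_entry q p v)); first by ring.
by rewrite cauchy_entry_pair // /pair_weight !mulrA.
Qed.

Theorem mainTheorem14 (R : comUnitRingType) (n : nat)
  (chi : 'I_n -> R) (hbar : R) (q : 'I_n -> R)
  (hq : forall j : 'I_n, q j \is a GRing.unit)
  (hdiff : forall i j : 'I_n, i != j -> (1 - q i / q j) \is a GRing.unit)
  (k : nat) (hk : (1 <= k <= n)%N) :
  Ecoef chi hbar q k =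
  \sum_(K : {set 'I_n} | #|K| == k)
     \sum_(s : {perm 'I_n} | is_matching K s) Jw chi K s * Vw hbar q s.
Proof.
rewrite /Ecoef coef_detPoly; last by case/andP: hk.
apply: eq_bigr => K _.
apply: (set_recursion_unique (c := chi) (w := pair_weight hbar q)
          (G := matching_sum chi hbar q)).
- by rewrite minor0 matching_sum0.
- exact: Mchi_minor_rec.
- exact: matching_sum_rec.
Qed.
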